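(* Let $\mathcal L,\mathcal L'\in\mathfrak o$ and $\beta\in{}_{\mathcal L'}\underline W_{\mathcal L}$. (1) If $\gamma\in{}_{\mathcal L''}\underline W_{\mathcal L'}$, left multiplication by $w^\gamma$ is an isomorphism of posets $(\beta,\le_\beta)\xrightarrow{\sim}(\gamma\beta,\le_{\gamma\beta})$. (2) If $\delta\in{}_{\mathcal L}\underline W_{\mathcal L''}$, right multiplication by $w^\delta$ is an isomorphism of posets $(\beta,\le_\beta)\xrightarrow{\sim}(\beta\delta,\le_{\beta\delta})$. (3) For $w,w'\in\beta$, if $w'\le_\beta w$ then $w'\le w$ in the Bruhat order of $W$.
   Context: $G$ is a connected split reductive group over a finite field, $B\supset T$ a Borel subgroup and split maximal torus, $\Phi^+$ the positive roots, $W=N_G(T)/T$ with simple reflections determined by $B$ and Bruhat order $\le$. $\mathrm{Ch}(T)$: rank-one character sheaves on $T$, with $W$-action $w\mathcal L=(w^{-1})^*\mathcal L$; $\mathfrak o$ a $W$-orbit, $\mathcal L,\mathcal L',\mathcal L''\in\mathfrak o$. $W^\circ_{\mathcal L}$ is the subgroup generated by reflections $r_\alpha$ for roots $\alpha$ with $(\alpha^\vee)^*\mathcal L$ trivial on $\mathbb G_m$; it is a Coxeter group with simple reflections given by the simple roots of $\Phi_{\mathcal L}\cap\Phi^+$, with its own Bruhat order $\le_{W^\circ_{\mathcal L}}$. ${}_{\mathcal L'}W_{\mathcal L}=\{w:w\mathcal L=\mathcal L'\}$; blocks are elements of ${}_{\mathcal L'}\underline W_{\mathcal L}={}_{\mathcal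 L'}W_{\mathcal L}/W^\circ_{\mathcal L}$, with product $\gamma\beta=\{w_1w_2:w_1\in\gamma,w_2\in\beta\}$. Each block $\beta$ has a unique Bruhat-minimal element $w^\beta$ and every element of $\beta$ is uniquely $w^\beta x$, $x\in W^\circ_{\mathcal L}$. The partial order $\le_\beta$ on $\beta$: $w^\beta x'\le_\beta w^\beta x$ iff $x'\le_{W^\circ_{\mathcal L}}x$. *)

From HB Require Import structures.
From mathcomp Require Import all_boot all_order all_algebra.
From Stdlib Require Import Relations.
Set Implicit Arguments. Unset Strict Implicit. Unset Printing Implicit Defensive.
Import GRing.Theory Num.Theory.
Local Open Scope ring_scope.

(* Root datum of (G,T): cocharacters X_*(T) = 'cV[int]_n (column vectors),  *)
(* characters X^*(T) = 'rV[int]_n (row vectors), roots indexed by 'I_m.     *)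

Definition pairing (n : nat) (chi : 'rV[int]_n) (lam : 'cV[int]_n) : int :=
  (chi *m lam) ord0 ord0.

(* reduced root datum axioms (Springer 7.4.1, plus reducedness) *)
Definition root_datum (n m : nat) (root : 'I_m -> 'rV[int]_n)
    (coroot : 'I_m -> 'cV[int]_n) : Prop :=
  injective root /\
  (forall i, pairing (root i) (coroot i) = 2) /\
  (forall i j, exists k,
      root k = root j - (pairing (root j) (coroot i)) *: root i /\
      coroot k = coroot j - (pairing (root i) (coroot j)) *: coroot i) /\
  (forall i j (c : int), root j = c *: root i -> c = 1 \/ c = -1).

Definition refl_mx (n m : nat) (root : 'I_m -> 'rV[int]_n)
    (coroot : 'I_m -> 'cV[int]_n) (i : 'I_m) : 'M[int]_n :=
  1%:M - coroot i *m root i.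

(* positive system determined by B: given by a generic cocharacter f *)
Definition generic (n m : nat) (root : 'I_m -> 'rV[int]_n) (f : 'cV[int]_n) :=
  forall i, pairing (root i) f != 0.

Definition positive (n m : nat) (root : 'I_m -> 'rV[int]_n) (f : 'cV[int]_n)
    (i : 'I_m) : Prop := 0 < pairing (root i) f.

(* simple roots of the positive system P' := {i | Q i /\ positive i} of the
   (sub)root system {i | Q i}: the indecomposable positive roots *)
Definition simple_in (n m : nat) (root : 'I_m -> 'rV[int]_n) (f : 'cV[int]_n)
    (Q : 'I_m -> Prop) (i : 'I_m) : Prop :=
  Q i /\ positive root f i /\
  ~ (exists j k, Q j /\ positive root f j /\ Q k /\ positive root f k /\
                 root i = root j + root k).

Definition word_prod (n : nat) (s : seq 'M[int]_n) : 'M[int]_n :=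
  foldr (fun g M => g *m M) 1%:M s.

Definition is_word (n : nat) (S : 'M[int]_n -> Prop) (s : seq 'M[int]_n) :=
  forall g, g \in s -> S g.

Definition gen_by (n : nat) (S : 'M[int]_n -> Prop) (w : 'M[int]_n) : Prop :=
  exists s, is_word S s /\ word_prod s = w.

Definition reduced_word (n : nat) (S : 'M[int]_n -> Prop) (s : seq 'M[int]_n)
    (w : 'M[int]_n) : Prop :=
  is_word S s /\ word_prod s = w /\
  forall s', is_word S s' -> word_prod s' = w -> (size s <= size s')%N.

Definition cox_refl (n : nat) (S : 'M[int]_n -> Prop) (t : 'M[int]_n) : Prop :=
  exists u s, gen_by S u /\ S s /\ t = u *m s *m invmx u.

Definition len_lt (n : nat) (S : 'M[int]_n -> Prop) (u v : 'M[int]_n) : Prop :=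
  exists su sv, reduced_word S su u /\ reduced_word S sv v /\ (size su < size sv)%N.

Definition bruhat_step (n : nat) (S : 'M[int]_n -> Prop) (u v : 'M[int]_n) :=
  exists t, cox_refl S t /\ v = u *m t /\ len_lt S u v.

Definition bruhat (n : nat) (S : 'M[int]_n -> Prop) (w' w : 'M[int]_n) : Prop :=
  clos_refl_trans _ (bruhat_step S) w' w.

Section Weyl.
Variables (n m : nat) (root : 'I_m -> 'rV[int]_n) (coroot : 'I_m -> 'cV[int]_n)
  (f : 'cV[int]_n).

Definition all_refl (w : 'M[int]_n) : Prop := exists i, w = refl_mx root coroot i.
Definition inW : 'M[int]_n -> Prop := gen_by all_refl.
Definition simple_refl (w : 'M[int]_n) : Prop :=
  exists i, simple_in root f (fun _ => True) i /\ w = refl_mx root coroot i.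

Variable A : zmodType.

(* w L = (w^{-1})^* L, i.e. (w L)(lam) = L (w^{-1} lam) *)
Definition act (w : 'M[int]_n) (L : 'cV[int]_n -> A) : 'cV[int]_n -> A :=
  fun lam => L (invmx w *m lam).

Definition maps (w : 'M[int]_n) (L L' : 'cV[int]_n -> A) : Prop :=
  inW w /\ forall lam, act w L lam = L' lam.

(* Phi_L : (alpha^v)^* L trivial *)
Definition inPhiL (L : 'cV[int]_n -> A) (i : 'I_m) : Prop := L (coroot i) = 0.

Definition refl_L (L : 'cV[int]_n -> A) (w : 'M[int]_n) : Prop :=
  exists i, inPhiL L i /\ w = refl_mx root coroot i.
Definition inWo (L : 'cV[int]_n -> A) : 'M[int]_n -> Prop := gen_by (refl_L L).
Definition simple_refl_L (L : 'cV[int]_n -> A) (w : 'M[int]_n) : Prop :=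
  exists i, simple_in root f (inPhiL L) i /\ w = refl_mx root coroot i.

Definition block (L : 'cV[int]_n -> A) (b : 'M[int]_n) : 'M[int]_n -> Prop :=
  fun w => exists x, inWo L x /\ w = b *m x.

Definition block_prod (g bt : 'M[int]_n -> Prop) : 'M[int]_n -> Prop :=
  fun w => exists w1 w2, g w1 /\ bt w2 /\ w = w1 *m w2.

Definition min_in (bt : 'M[int]_n -> Prop) (wm : 'M[int]_n) : Prop :=
  bt wm /\ forall v, bt v -> bruhat simple_refl v wm -> v = wm.

Definition le_block (L : 'cV[int]_n -> A) (wm : 'M[int]_n) (w' w : 'M[int]_n) :=
  exists x x', inWo L x /\ inWo L x' /\ w = wm *m x /\ w' = wm *m x' /\
               bruhat (simple_refl_L L) x' x.

End Weyl.

Definition lmul (n : nat) (a w : 'M[int]_n) : 'M[int]_n := a *m w.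
Definition rmul (n : nat) (a w : 'M[int]_n) : 'M[int]_n := w *m a.

Definition poset_iso (T : Type) (P Q : T -> Prop) (leP leQ : T -> T -> Prop)
    (phi : T -> T) : Prop :=
  (forall w, P w -> Q (phi w)) /\
  (forall v, Q v -> exists w, P w /\ phi w = v) /\
  (forall w w', P w -> P w' -> phi w = phi w' -> w = w') /\
  (forall w w', P w -> P w' -> (leP w' w <-> leQ (phi w') (phi w))).

(** Say that [u] in [W] is positive on [Phi_L] if it sends the positive roots
    of [Phi_L] to positive roots.  By the exchange condition, [l(y s_b) > l(y)]
    iff [y] sends the positive root [b] to a positive root, both in [W] and in
    the Coxeter group [W°_L], whose simple roots are the indecomposable
    positive roots of [Phi_L] (an invariant form shows they pair
    non-positively).  Hence left multiplication by [u] positive on [Phi_L]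
    turns each Bruhat step [x' < x' t] of [W°_L] into a Bruhat step
    [u x' < u x' t] of [W].  This gives (3), and it shows that the minimal
    element of a block is its unique element positive on [Phi_L].  Since
    [w^gamma w^beta] is positive on [Phi_L], it is [w^(gamma beta)], which gives
    (1).  Conjugation by [w^delta] maps the simple roots of [Phi_L''] onto
    those of [Phi_L], so it is an isomorphism of Coxeter systems
    [W°_L ~ W°_L''] and preserves the Bruhat orders, which gives (2). *)

From HB Require Import structures.
From mathcomp Require Import all_boot all_order all_algebra.
From Stdlib Require Import Relations Classical.
From mathcomp Require Import ring zify.
Set Implicit Arguments. Unset Strict Implicit. Unset Printing Implicit Defensive.
Import Order.TTheory GRing.Theory Num.Theory.
Local Open Scope ring_scope.

Section Pairing.
Variable n : nat.
Implicit Types (x y : 'rV[int]_n) (v : 'cV[int]_n).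

Lemma mulmx_pairing x v : x *m v = (pairing x v)%:M.
Proof. by rewrite /pairing [LHS]mx11_scalar. Qed.

Lemma pairing0l v : pairing 0 v = 0.
Proof. by rewrite /pairing mul0mx mxE. Qed.

Lemma pairingDl x y v : pairing (x + y) v = pairing x v + pairing y v.
Proof. by rewrite /pairing mulmxDl mxE. Qed.

Lemma pairingNl x v : pairing (- x) v = - pairing x v.
Proof. by rewrite /pairing mulNmx mxE. Qed.

Lemma pairingBl x y v : pairing (x - y) v = pairing x v - pairing y v.
Proof. by rewrite pairingDl pairingNl. Qed.

Lemma pairingNr x v : pairing x (- v) = - pairing x v.
Proof. by rewrite /pairing mulmxN mxE. Qed.

Lemma pairingZl (a : int) x v : pairing (a *: x) v = a * pairing x v.
Proof. by rewrite /pairing -scalemxAl mxE. Qed.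

Lemma pairing_mulmx x (M : 'M[int]_n) v : pairing (x *m M) v = pairing x (M *m v).
Proof. by rewrite /pairing mulmxA. Qed.

Lemma pairing_sum I (r : seq I) (P : pred I) (F : I -> 'rV[int]_n) v :
  pairing (\sum_(i <- r | P i) F i) v = \sum_(i <- r | P i) pairing (F i) v.
Proof. exact: (big_morph (fun x => pairing x v) (fun x y => pairingDl x y v) (pairing0l v)). Qed.

End Pairing.

Section RootDatum.
Variables (n m : nat) (root : 'I_m -> 'rV[int]_n) (coroot : 'I_m -> 'cV[int]_n).
Hypothesis RD : root_datum root coroot.
Local Notation s := (refl_mx root coroot).

Lemma root_inj : injective root.
Proof. by case: RD. Qed.

Lemma pairing_root_coroot i : pairing (root i) (coroot i) = 2.
Proof. by case: RD => _ []. Qed.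

Lemma root_reduced i j (c : int) : root j = c *: root i -> c = 1 \/ c = -1.
Proof. by case: RD => _ [_ [_]]; apply. Qed.

(* The index of the root [s_i alpha_j]; the fallback [j] is never reached. *)
Definition refl_root (i j : 'I_m) : 'I_m :=
  odflt j [pick k | (root k == root j - pairing (root j) (coroot i) *: root i) &&
                    (coroot k == coroot j - pairing (root i) (coroot j) *: coroot i)].

Lemma refl_rootE i j :
  root (refl_root i j) = root j - pairing (root j) (coroot i) *: root i /\
  coroot (refl_root i j) = coroot j - pairing (root i) (coroot j) *: coroot i.
Proof.
rewrite /refl_root; case: pickP => [k /andP[/eqP -> /eqP ->] //|none].
case: RD => _ [_ [closed _]]; have [k [rk ck]] := closed i j.
by move: (none k); rewrite rk ck !eqxx.
Qed.

Lemma root_refl_root i j :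
  root (refl_root i j) = root j - pairing (root j) (coroot i) *: root i.
Proof. by case: (refl_rootE i j). Qed.

Lemma coroot_refl_root i j :
  coroot (refl_root i j) = coroot j - pairing (root i) (coroot j) *: coroot i.
Proof. by case: (refl_rootE i j). Qed.

Lemma mulmx_refl x i : x *m s i = x - pairing x (coroot i) *: root i.
Proof. by rewrite /refl_mx mulmxBr mulmx1 mulmxA mulmx_pairing mul_scalar_mx. Qed.

Lemma root_mul_refl j i : root j *m s i = root (refl_root i j).
Proof. by rewrite root_refl_root mulmx_refl. Qed.

Lemma refl_mul_coroot i j : s i *m coroot j = coroot (refl_root i j).
Proof.
by rewrite coroot_refl_root /refl_mx mulmxBl mul1mx -mulmxA mulmx_pairing mul_mx_scalar.
Qed.

Lemma refl_mx_invol i : s i *m s i = 1%:M.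
Proof.
rewrite /refl_mx mulmxBl mul1mx mulmxBr mulmx1 !mulmxA -(mulmxA (coroot i)).
rewrite mulmx_pairing pairing_root_coroot mul_mx_scalar -scalemxAl scaler_nat mulr2n.
by rewrite opprB !addrA subrK addrK.
Qed.

Lemma refl_rootK i : involutive (refl_root i).
Proof. by move=> j; apply: root_inj; rewrite -!root_mul_refl -mulmxA refl_mx_invol mulmx1. Qed.

Lemma refl_root_inj i : injective (refl_root i).
Proof. exact: inv_inj (refl_rootK i). Qed.

Definition neg_root (j : 'I_m) : 'I_m := refl_root j j.

Lemma root_neg j : root (neg_root j) = - root j.
Proof.
by rewrite /neg_root root_refl_root pairing_root_coroot scaler_nat mulr2n opprD addNKr.
Qed.

Lemma coroot_neg j : coroot (neg_root j) = - coroot j.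
Proof.
by rewrite /neg_root coroot_refl_root pairing_root_coroot scaler_nat mulr2n opprD addNKr.
Qed.

Lemma refl_mx_neg j : s (neg_root j) = s j.
Proof. by rewrite /refl_mx root_neg coroot_neg mulNmx mulmxN opprK. Qed.

End RootDatum.

Section Words.
Variable n : nat.
Implicit Types (S : 'M[int]_n -> Prop) (s : seq 'M[int]_n) (A B : 'M[int]_n).

Lemma word_prod_cat s1 s2 : word_prod (s1 ++ s2) = word_prod s1 *m word_prod s2.
Proof. by elim: s1 => [|g s1 IH] /=; rewrite ?mul1mx // IH mulmxA. Qed.

Lemma word_prod_rcons s g : word_prod (rcons s g) = word_prod s *m g.
Proof. by rewrite -cats1 word_prod_cat /= mulmx1. Qed.

Lemma is_word_cat S s1 s2 : is_word S s1 -> is_word S s2 -> is_word S (s1 ++ s2).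
Proof. by move=> w1 w2 g; rewrite mem_cat => /orP[/w1|/w2]. Qed.

Lemma is_word_cons S g s : is_word S (g :: s) <-> S g /\ is_word S s.
Proof.
split=> [w|[Sg w] x]; last by rewrite inE => /orP[/eqP->|/w].
by split=> [|x xs]; apply: w; rewrite inE ?eqxx ?xs ?orbT.
Qed.

Lemma is_word_rcons S g s : is_word S (rcons s g) <-> S g /\ is_word S s.
Proof.
split=> [w|[Sg w] x]; last by rewrite mem_rcons inE => /orP[/eqP->|/w].
by split=> [|x xs]; apply: w; rewrite mem_rcons inE ?eqxx ?xs ?orbT.
Qed.

Lemma is_word_rev S s : is_word S s -> is_word S (rev s).
Proof. by move=> w g; rewrite mem_rev; apply: w. Qed.

Lemma is_word_map S S' (h : 'M[int]_n -> 'M[int]_n) s :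
  (forall g, S g -> S' (h g)) -> is_word S s -> is_word S' (map h s).
Proof. by move=> hS w g /mapP[x xs ->]; apply/hS/w. Qed.

Lemma gen_by1 S : gen_by S 1%:M.
Proof. by exists [::]. Qed.

Lemma gen_by_gen S g : S g -> gen_by S g.
Proof. by move=> Sg; exists [:: g]; split=> [x /[1!inE] /eqP->|] //=; rewrite mulmx1. Qed.

Lemma gen_byM S A B : gen_by S A -> gen_by S B -> gen_by S (A *m B).
Proof.
move=> [s1 [w1 <-]] [s2 [w2 <-]]; exists (s1 ++ s2).
by rewrite word_prod_cat; split=> //; apply: is_word_cat.
Qed.

Lemma gen_by_sub S S' A : (forall g, S g -> gen_by S' g) -> gen_by S A -> gen_by S' A.
Proof.
move=> sub [s [+ <-]]; elim: s => [|g s IH] /=; first by move=> _; apply: gen_by1.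
by move/is_word_cons=> [Sg w]; apply: gen_byM; [apply: sub | apply: IH].
Qed.

Lemma mulmx1_invmx A B : A *m B = 1%:M -> invmx A = B.
Proof.
move=> AB; have [uA _] := mulmx1_unit AB.
by rewrite -[invmx A]mulmx1 -AB mulmxA mulVmx // mul1mx.
Qed.

Lemma invmxM A B : A \in unitmx -> B \in unitmx -> invmx (A *m B) = invmx B *m invmx A.
Proof.
move=> uA uB; apply: mulmx1_invmx.
by rewrite mulmxA -(mulmxA A) mulmxV // mulmx1 mulmxV.
Qed.

Definition involutions S := forall g, S g -> g *m g = 1%:M.

Lemma word_prod_rev S s : involutions S -> is_word S s ->
  word_prod s *m word_prod (rev s) = 1%:M.
Proof.
move=> invS; elim: s => [|g s IH] /=; first by rewrite mulmx1.
move/is_word_cons=> [Sg w]; rewrite rev_cons word_prod_rcons.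
by rewrite mulmxA -(mulmxA g) IH // mulmx1 invS.
Qed.

Lemma gen_by_unitmx S A : involutions S -> gen_by S A -> A \in unitmx.
Proof. by move=> invS [s [w <-]]; case: (mulmx1_unit (word_prod_rev invS w)). Qed.

Lemma gen_by_inv S A : involutions S -> gen_by S A -> gen_by S (invmx A).
Proof.
move=> invS [s [w <-]]; exists (rev s).
by rewrite (mulmx1_invmx (word_prod_rev invS w)); split=> //; apply: is_word_rev.
Qed.

End Words.

Section RootAction.
Variables (n m : nat) (root : 'I_m -> 'rV[int]_n) (coroot : 'I_m -> 'cV[int]_n).
Hypothesis RD : root_datum root coroot.
Local Notation s := (refl_mx root coroot).
Implicit Types (S : 'M[int]_n -> Prop) (Q : 'I_m -> Prop) (u w : 'M[int]_n).

(* [w] acts on cocharacters by left multiplication, hence on characters by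
   right multiplication by [w^-1]. *)
Definition sends_root w j k := root k *m w = root j /\ w *m coroot j = coroot k.

Lemma sends_root1 j : sends_root 1%:M j j.
Proof. by split; rewrite ?mulmx1 ?mul1mx. Qed.

Lemma sends_root_refl i j : sends_root (s i) j (refl_root root coroot i j).
Proof. by split; rewrite ?root_mul_refl ?refl_mul_coroot ?refl_rootK. Qed.

Lemma sends_rootM u w j k l : sends_root w j k -> sends_root u k l -> sends_root (u *m w) j l.
Proof. by move=> [rw cw] [ru cu]; split; rewrite ?mulmxA ?ru // -mulmxA cw. Qed.

Lemma sends_root_uniq w j k k' : w \in unitmx -> sends_root w j k -> sends_root w j k' -> k = k'.
Proof.
move=> uw [rk _] [rk' _]; apply: (root_inj RD).
by apply: (can_inj (mulmxK uw)); rewrite rk rk'.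
Qed.

Lemma sends_root_neg w j k :
  sends_root w j k -> sends_root w (neg_root root coroot j) (neg_root root coroot k).
Proof.
by move=> [rw cw]; split; rewrite ?root_neg ?coroot_neg // ?mulNmx ?mulmxN ?rw ?cw.
Qed.

Lemma sends_root_inv u j k : u \in unitmx -> sends_root u j k -> sends_root (invmx u) k j.
Proof. by move=> uu [ru cu]; split; rewrite -?ru -?cu ?mulmxK ?mulKmx. Qed.

Lemma sends_root_conj u j k : sends_root u j k -> u *m s j = s k *m u.
Proof.
move=> [ru cu]; rewrite /refl_mx mulmxBr mulmx1 mulmxBl mul1mx.
by rewrite mulmxA cu -mulmxA ru.
Qed.

Lemma sends_root_conjK u j k : u \in unitmx -> sends_root u j k -> u *m s j *m invmx u = s k.
Proof. by move=> uu /sends_root_conj ->; rewrite mulmxK. Qed.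

Lemma sends_root_conjV u j k : u \in unitmx -> sends_root u j k -> invmx u *m s k *m u = s j.
Proof. by move=> uu /sends_root_conj uc; rewrite -mulmxA -uc mulKmx. Qed.

Definition refl_gens S := forall g, S g -> exists i, g = s i.

Lemma refl_gens_invol S : refl_gens S -> involutions S.
Proof. by move=> reflS g /reflS[i ->]; apply: refl_mx_invol. Qed.

Lemma sends_root_ex S w : refl_gens S -> gen_by S w -> forall j, exists k, sends_root w j k.
Proof.
move=> reflS [t [+ <-]]; elim: t => [|g t IH] /= wt j; first by exists j; apply: sends_root1.
move/is_word_cons: wt => [/reflS[i ->] wt]; have [k tjk] := IH wt j.
by exists (refl_root root coroot i k); apply: sends_rootM tjk (sends_root_refl _ _).
Qed.

Lemma sends_root_onto S w : refl_gens S -> gen_by S w -> forall k, exists j, sends_root w j k.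
Proof.
move=> reflS [t [+ <-]]; elim: t => [|g t IH] /= wt k; first by exists k; apply: sends_root1.
move/is_word_cons: wt => [/reflS[i ->] wt]; have [j tj] := IH wt (refl_root root coroot i k).
exists j; apply: sends_rootM tj _.
by rewrite -[in X in sends_root _ _ X](refl_rootK RD i k); apply: sends_root_refl.
Qed.

Definition refl_closed Q := forall i j, Q i -> Q j -> Q (refl_root root coroot i j).

Definition refls_in Q w := exists i, Q i /\ w = s i.

Lemma refl_gens_refls_in Q : refl_gens (refls_in Q).
Proof. by move=> g [i [_ ->]]; exists i. Qed.

Lemma refl_closed_neg Q j : refl_closed Q -> Q j -> Q (neg_root root coroot j).
Proof. by move=> closedQ Qj; apply: closedQ. Qed.

Lemma gen_refls_in_stable Q x j k : refl_closed Q -> gen_by (refls_in Q) x ->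
  sends_root x j k -> Q j <-> Q k.
Proof.
move=> closedQ [t [wt <-]]; elim: t wt k => [|g t IH] /= wt k xjk.
  by rewrite (sends_root_uniq (unitmx1 _ _) xjk (sends_root1 j)).
move: xjk; move/is_word_cons: wt => [[i [Qi ->]] wt] xjk.
have [k' tjk'] := sends_root_ex (@refl_gens_refls_in Q) (ex_intro _ t (conj wt erefl)) j.
have unit_st : s i *m word_prod t \in unitmx.
  apply: (gen_by_unitmx (refl_gens_invol (@refl_gens_refls_in Q))).
  by apply: gen_byM; [apply: gen_by_gen; exists i | exists t].
rewrite (sends_root_uniq unit_st xjk (sends_rootM tjk' (sends_root_refl i k'))).
have [to from] := IH wt k' tjk'; split=> [/to|]; first exact: closedQ.
by move/(closedQ i _ Qi); rewrite refl_rootK.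
Qed.

End RootAction.

Section InvariantForm.
Variables (n m : nat) (root : 'I_m -> 'rV[int]_n) (coroot : 'I_m -> 'cV[int]_n).
Hypothesis RD : root_datum root coroot.
Local Notation s := (refl_mx root coroot).
Implicit Types (x y z : 'rV[int]_n).

Definition inv_form x y : int := \sum_(k < m) pairing x (coroot k) * pairing y (coroot k).

Lemma inv_formC x y : inv_form x y = inv_form y x.
Proof. by apply: eq_bigr => k _; rewrite mulrC. Qed.

Lemma inv_form0l y : inv_form 0 y = 0.
Proof. by rewrite /inv_form big1 // => k _; rewrite pairing0l mul0r. Qed.

Lemma inv_formDl x y z : inv_form (x + y) z = inv_form x z + inv_form y z.
Proof. by rewrite /inv_form -big_split; apply: eq_bigr => k _; rewrite pairingDl mulrDl. Qed.

Lemma inv_formNl x z : inv_form (- x) z = - inv_form x z.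
Proof. by rewrite /inv_form -sumrN; apply: eq_bigr => k _; rewrite pairingNl mulNr. Qed.

Lemma inv_formBl x y z : inv_form (x - y) z = inv_form x z - inv_form y z.
Proof. by rewrite inv_formDl inv_formNl. Qed.

Lemma inv_formZl a x z : inv_form (a *: x) z = a * inv_form x z.
Proof. by rewrite /inv_form mulr_sumr; apply: eq_bigr => k _; rewrite pairingZl mulrA. Qed.

Lemma inv_form_suml I (r : seq I) (P : pred I) (F : I -> 'rV[int]_n) y :
  inv_form (\sum_(i <- r | P i) F i) y = \sum_(i <- r | P i) inv_form (F i) y.
Proof. exact: (big_morph (fun x => inv_form x y) (fun x z => inv_formDl x z y) (inv_form0l y)). Qed.

(* The reflection [s i] permutes the coroots. *)
Lemma inv_form_refl x y i : inv_form (x *m s i) (y *m s i) = inv_form x y.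
Proof.
rewrite /inv_form (reindex_inj (refl_root_inj (i:=i) RD)) /=; apply: eq_bigr => k _.
by rewrite !pairing_mulmx !refl_mul_coroot ?refl_rootK.
Qed.

Lemma inv_form_root a x :
  2 * inv_form (root a) x = pairing x (coroot a) * inv_form (root a) (root a).
Proof.
have := inv_form_refl (root a) x a.
rewrite (root_mul_refl RD) -/(neg_root root coroot a) (root_neg RD) inv_formNl mulmx_refl.
rewrite inv_formC inv_formBl inv_formZl inv_formC opprB => e.
by rewrite mulr2n mulrDl mul1r -{1}e subrK.
Qed.

Lemma inv_form_root_gt0 a : 0 < inv_form (root a) (root a).
Proof.
rewrite /inv_form (bigD1 a) //= pairing_root_coroot // ltr_pwDl //.
by apply: sumr_ge0 => k _; rewrite -expr2 sqr_ge0.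
Qed.

Lemma inv_form_root_gt0E a x : (0 < pairing x (coroot a)) = (0 < inv_form (root a) x).
Proof.
have := inv_form_root a x; have := inv_form_root_gt0 a.
move: (pairing _ _) (inv_form _ x) (inv_form _ _) => p F A A_gt0 e.
by rewrite -(pmulr_lgt0 _ A_gt0) -e pmulr_rgt0.
Qed.

Lemma inv_form_root_le0E a x : (pairing x (coroot a) <= 0) = (inv_form (root a) x <= 0).
Proof. by rewrite !leNgt inv_form_root_gt0E. Qed.

Lemma inv_form_Cauchy_Schwarz x y :
  0 < inv_form x x -> inv_form x y ^+ 2 <= inv_form x x * inv_form y y.
Proof.
set A := inv_form x x; set B := inv_form x y; set Y := inv_form y y => A_gt0.
have : 0 <= \sum_(k < m) (A * pairing y (coroot k) - B * pairing x (coroot k)) ^+ 2.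
  by apply: sumr_ge0 => k _; apply: sqr_ge0.
rewrite (eq_bigr (fun k => A * A * (pairing y (coroot k) * pairing y (coroot k))
    - 2 * A * B * (pairing x (coroot k) * pairing y (coroot k))
    + B * B * (pairing x (coroot k) * pairing x (coroot k)))); last by move=> k _; ring.
rewrite big_split sumrB /= -!mulr_sumr -/(inv_form y y) -/(inv_form x y) -/(inv_form x x).
have -> : A * A * Y - 2 * A * B * B + B * B * A = A * (A * Y - B ^+ 2) by ring.
by rewrite pmulr_rge0 // subr_ge0.
Qed.

End InvariantForm.

Lemma Cartan_entries_eq2 (x y F A G : int) : 0 < A -> 0 < G ->
  2 * F = x * A -> 2 * F = y * G -> F ^+ 2 <= A * G ->
  0 < x -> 0 < y -> x != 1 -> y != 1 -> x = 2 /\ y = 2.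
Proof.
move=> A_gt0 G_gt0 eA eG CS x_gt0 y_gt0 x1 y1.
have : x * y * (A * G) <= 4 * (A * G).
  rewrite (_ : x * y * (A * G) = (x * A) * (y * G)); last by ring.
  by rewrite -eA -eG (_ : 2 * F * (2 * F) = 4 * F ^+ 2) ?ler_pM2l //; ring.
by rewrite ler_pM2r ?mulr_gt0 //; move: x1 y1; nia.
Qed.

Section SimpleRoots.
Variables (n m : nat) (root : 'I_m -> 'rV[int]_n) (coroot : 'I_m -> 'cV[int]_n)
  (f : 'cV[int]_n).
Hypothesis RD : root_datum root coroot.
Hypothesis GF : generic root f.
Local Notation pos := (positive root f).
Local Notation neg_root := (neg_root root coroot).
Local Notation refl_root := (refl_root root coroot).
Local Notation inv_form := (inv_form coroot).
Local Notation height j := (pairing (root j) f).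

Lemma positive_neg j : pos (neg_root j) <-> ~ pos j.
Proof.
rewrite /positive root_neg // pairingNl oppr_gt0; have := GF j.
by case: ltgtP => // _ _; split.
Qed.

Lemma sum_roots_count (l : seq 'I_m) a :
  \sum_(i <- l) root i = (count_mem a l)%:Z *: root a + \sum_(i <- l | i != a) root i.
Proof.
elim: l => [|x l IH]; first by rewrite !big_nil scale0r addr0.
rewrite !big_cons IH /=; case: eqP => [->|_] /=; rewrite PoszD scalerDl.
  by rewrite scale1r addrA.
by rewrite scale0r add0r addrCA.
Qed.

(* The roots [a + 2k (a - g)] would be pairwise distinct. *)
Lemma pairing_eq2_root_eq a g :
  pairing (root g) (coroot a) = 2 -> pairing (root a) (coroot g) = 2 -> a = g.
Proof.
move=> e1 e2; case: (eqVneq a g) => // ag; exfalso.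
pose v := root a - root g.
have va : pairing v (coroot a) = 0 by rewrite pairingBl pairing_root_coroot // e1 subrr.
have vg : pairing v (coroot g) = 0 by rewrite pairingBl pairing_root_coroot // e2 subrr.
pose fix string k := if k is k'.+1 then refl_root a (refl_root g (string k')) else a.
have root_string k : root (string k) = root a + (2 * k%:Z) *: v.
  elim: k => [|k IH] /=; first by rewrite mulr0 scale0r addr0.
  rewrite !root_refl_root // IH pairingDl pairingZl vg mulr0 addr0 e2.
  rewrite pairingBl pairingDl !pairingZl va pairing_root_coroot // e1 mulr0 addr0.
  by apply/matrixP => i j; rewrite /v !mxE -[k.+1]addn1 PoszD; ring.
have string_inj : injective (fun i : 'I_m.+1 => string i).
  move=> i j /(congr1 root); rewrite !root_string => /addrI /eqP.
  rewrite -subr_eq0 -scalerBl scalemx_eq0 => /orP[|].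
    by rewrite subr_eq0 => /eqP e; apply: ord_inj; lia.
  by rewrite subr_eq0 => /eqP /(root_inj RD) /eqP; rewrite (negbTE ag).
by have := leq_card _ string_inj; rewrite !card_ord ltnn.
Qed.

Lemma sum_simple_roots Q b : Q b -> pos b ->
  exists l, (forall i, i \in l -> simple_in root f Q i) /\ root b = \sum_(i <- l) root i.
Proof.
move=> Qb; rewrite /positive; move: {2}`|height b|%N (leqnn `|height b|%N) => N.
elim: N b Qb => [|N IH] b Qb hb pb; first by lia.
case: (classic (simple_in root f Q b)) => [sb|].
  by exists [:: b]; split=> [i /[1!inE] /eqP->|]; rewrite ?big_seq1.
move=> /not_and_or [//|/not_and_or [//|/NNPP [j [k [Qj [pj [Qk [pk e]]]]]]]].
have hE : height b = height j + height k by rewrite e pairingDl.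
rewrite /positive in pj pk.
have [lj [sj ej]] := IH j Qj ltac:(lia) pj.
have [lk [sk ek]] := IH k Qk ltac:(lia) pk.
exists (lj ++ lk); split; first by move=> i; rewrite mem_cat => /orP[/sj|/sk].
by rewrite big_cat /= e ej ek.
Qed.

Section ClosedSubsystem.
Variable Q : 'I_m -> Prop.
Hypothesis closedQ : refl_closed root coroot Q.
Local Notation simple := (simple_in root f Q).

Lemma simple_pairing_neq1 a g : simple a -> simple g -> pairing (root g) (coroot a) != 1.
Proof.
move=> [Qa [pa indec_a]] [Qg [pg indec_g]]; apply/eqP => e.
have rt : root (refl_root a g) = root g - root a by rewrite root_refl_root // e scale1r.
have Qt : Q (refl_root a g) by apply: closedQ.
case: (boolP (0 < pairing (root (refl_root a g)) f)) => pt.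
  by apply: indec_g; exists a, (refl_root a g); rewrite rt addrC subrK.
have pn : pos (neg_root (refl_root a g)) by apply/positive_neg/negP.
apply: indec_a; exists g, (neg_root (refl_root a g)).
by rewrite root_neg // rt opprB addrC subrK; do !split => //; apply: refl_closed_neg.
Qed.

Lemma simple_pairing_le0 a g : a != g -> simple a -> simple g ->
  pairing (root g) (coroot a) <= 0.
Proof.
move=> ag sa sg; rewrite leNgt; apply/negP => x_gt0.
have y_gt0 : 0 < pairing (root a) (coroot g).
  by rewrite (inv_form_root_gt0E RD) inv_formC -(inv_form_root_gt0E RD).
have k2 : 2 * inv_form (root a) (root g) =
          pairing (root a) (coroot g) * inv_form (root g) (root g).
  by rewrite inv_formC inv_form_root.
have [ex ey] := Cartan_entries_eq2 (inv_form_root_gt0 RD a) (inv_form_root_gt0 RD g)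
  (inv_form_root RD a (root g)) k2 (inv_form_Cauchy_Schwarz (root g) (inv_form_root_gt0 RD a))
  x_gt0 y_gt0 (simple_pairing_neq1 sa sg) (simple_pairing_neq1 sg sa).
by move: ag; rewrite (pairing_eq2_root_eq ex ey) eqxx.
Qed.

(* Write the summands other than [a] as [X = c a]: heights give [0 <= c],
   and [(X, X) = c (a, X)] with [(a, X) <= 0] excludes [0 < c]; so [X] has
   height [0] and has no summand at all. *)
Lemma simple_sum_multiple (l : seq 'I_m) a (p : int) :
  simple a -> (forall i, i \in l -> simple i) -> \sum_(i <- l) root i = p *: root a ->
  forall i, i \in l -> i = a.
Proof.
move=> sa sl es i il; have [_ [pa _]] := sa; rewrite /positive in pa.
have := sum_roots_count l a; rewrite es.
set X := \sum_(i <- l | i != a) root i; set c := p - (count_mem a l)%:Z => eX.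
have {}eX : X = c *: root a by rewrite scalerBl eX addrC addKr.
have FaX_le0 : inv_form (root a) X <= 0.
  rewrite inv_formC inv_form_suml big_seq_cond; apply: sumr_le0 => j /andP[jl ja].
  rewrite inv_formC -(inv_form_root_le0E RD).
  by apply: simple_pairing_le0 sa (sl j jl); rewrite eq_sym.
have hX : pairing X f = \sum_(i <- l | (i \in l) && (i != a)) height i.
  by rewrite pairing_sum big_seq_cond.
have hX_ge0 : 0 <= pairing X f.
  by rewrite hX; apply: sumr_ge0 => j /andP[/sl [_ [/ltW]]].
have c0 : c = 0.
  have A_gt0 := inv_form_root_gt0 RD a.
  case: (ltgtP c 0) => // hc.
    by move: hX_ge0; rewrite eX pairingZl pmulr_lge0 // leNgt hc.
  have eXX : inv_form X X = c * inv_form (root a) X by rewrite {1}eX inv_formZl.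
  have eXX' : inv_form X X = c * c * inv_form (root a) (root a).
    by rewrite eX inv_formZl inv_formC inv_formZl mulrA.
  have : 0 < c * inv_form (root a) X by rewrite -eXX eXX' !mulr_gt0.
  by rewrite pmulr_rgt0 // ltNge FaX_le0.
move: hX; rewrite eX c0 scale0r pairing0l => /esym /eqP.
rewrite psumr_eq0 => [/allP all0|j /andP[/sl [_ [/ltW]]] //].
apply/eqP; apply: contraT => ia; move: (all0 i il); rewrite il ia /=.
by have [_ [/lt0r_neq0/negbTE ->]] := sl i il.
Qed.

Lemma refl_simple_positive a b : simple a -> Q b -> pos b -> b != a -> pos (refl_root a b).
Proof.
move=> sa Qb pb ba; apply: NNPP => npt.
have [Qa _] := sa.
have pd : pos (neg_root (refl_root a b)) by apply/positive_neg.
have Qd : Q (neg_root (refl_root a b)) := refl_closed_neg closedQ (closedQ Qa Qb).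
have [l1 [sl1 e1]] := sum_simple_roots Qb pb.
have [l2 [sl2 e2]] := sum_simple_roots Qd pd.
have rd : root (neg_root (refl_root a b)) = pairing (root b) (coroot a) *: root a - root b.
  by rewrite root_neg // root_refl_root // opprB.
have l1a : forall i, i \in l1 -> i = a.
  move=> i il1; apply: (@simple_sum_multiple (l1 ++ l2) a (pairing (root b) (coroot a))).
  - exact: sa.
  - by move=> j; rewrite mem_cat => /orP[/sl1|/sl2].
  - by rewrite big_cat /= -e1 -e2 rd addrC subrK.
  - by rewrite mem_cat il1.
have := sum_roots_count l1 a; rewrite -e1 big1_seq ?addr0 => [eb|i /andP[ia /l1a]].
  have [cnt1|//] := root_reduced RD eb.
  by move: eb; rewrite cnt1 scale1r => /(root_inj RD) /eqP; rewrite (negbTE ba).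
by move/eqP: ia.
Qed.

Lemma positive_pairing_simple b : Q b -> pos b -> ~ simple b ->
  exists2 a, simple a & 0 < pairing (root b) (coroot a).
Proof.
move=> Qb pb nsb; have [l [sl e]] := sum_simple_roots Qb pb.
apply: NNPP => none; have := inv_form_root_gt0 RD b.
rewrite {1}e inv_form_suml ltNge big_seq => /negP; apply; apply: sumr_le0 => i il.
rewrite -(inv_form_root_le0E RD) leNgt; apply/negP => pos_i.
by apply: none; exists i; [apply: sl|].
Qed.

End ClosedSubsystem.
End SimpleRoots.

Section Length.
Variable n : nat.
Implicit Types (S : 'M[int]_n -> Prop) (g w y : 'M[int]_n).

Lemma reduced_word_ex S w : gen_by S w -> exists t, reduced_word S t w.
Proof.
move=> [t0 [wt0 et0]]; move: {2}(size t0) (leqnn (size t0)) => N.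
elim: N t0 wt0 et0 => [|N IH] t wt et ht.
  by exists t; split=> //; split=> // t' _ _; move: ht; rewrite leqn0 => /eqP ->.
case: (classic (exists t', [/\ is_word S t', word_prod t' = w & size t' < size t]%N)).
  by move=> [t' [wt' et' lt]]; apply: (IH t') => //; lia.
move=> none; exists t; split=> //; split=> // t' wt' et'; rewrite leqNgt; apply/negP => lt.
by apply: none; exists t'.
Qed.

Lemma reduced_word_size S t1 t2 w :
  reduced_word S t1 w -> reduced_word S t2 w -> size t1 = size t2.
Proof.
by move=> [w1 [e1 min1]] [w2 [e2 min2]]; apply/eqP; rewrite eqn_leq min1 // min2.
Qed.

Lemma len_lt_asym S u v : len_lt S u v -> ~ len_lt S v u.
Proof.
move=> [tu [tv [ru [rv lt]]]] [tv' [tu' [rv' [ru' lt']]]].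
by rewrite (reduced_word_size ru ru') (reduced_word_size rv rv') in lt; lia.
Qed.

Lemma reduced_word_gen S t w : reduced_word S t w -> gen_by S w.
Proof. by move=> [wt [et _]]; exists t. Qed.

Lemma cox_refl_gen S g : S g -> cox_refl S g.
Proof. by move=> Sg; exists 1%:M, g; rewrite mul1mx invmx1 mulmx1; split=> //; apply: gen_by1. Qed.

Lemma reduced_word_rcons S t g w : reduced_word S (rcons t g) w -> reduced_word S t (word_prod t).
Proof.
move=> [/is_word_rcons [Sg wt] [et min_tg]]; split=> //; split=> // t' wt' et'.
rewrite -ltnS -(size_rcons t g) -(size_rcons t' g); apply: min_tg; first exact/is_word_rcons.
by rewrite !word_prod_rcons et' -word_prod_rcons.
Qed.

Lemma bruhat1_gen S y : gen_by S y -> bruhat S 1%:M y.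
Proof.
move=> /reduced_word_ex [t rt]; have [_ [ety _]] := rt; subst y.
elim/last_ind: t rt => [|t g IH] rtg; first exact: rt_refl.
have rt := reduced_word_rcons rtg; have [/is_word_rcons [Sg _] _] := rtg.
apply: (rt_trans _ _ _ (word_prod t) _ (IH rt)).
apply: rt_step; exists g; split; first exact: cox_refl_gen.
rewrite word_prod_rcons; split=> //; exists t, (rcons t g); split=> //.
by rewrite size_rcons; split=> //; rewrite -word_prod_rcons.
Qed.

End Length.

Section Exchange.
Variables (n m : nat) (root : 'I_m -> 'rV[int]_n) (coroot : 'I_m -> 'cV[int]_n)
  (f : 'cV[int]_n).
Hypothesis RD : root_datum root coroot.
Hypothesis GF : generic root f.
Local Notation s := (refl_mx root coroot).
Local Notation pos := (positive root f).
Local Notation neg_root := (neg_root root coroot).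
Local Notation refl_root := (refl_root root coroot).
Local Notation sends_root := (sends_root root coroot).
Local Notation height j := (pairing (root j) f).

Lemma refl_mx_unit i : s i \in unitmx.
Proof. by case: (mulmx1_unit (refl_mx_invol RD i)). Qed.

Lemma invmx_refl_mx i : invmx (s i) = s i.
Proof. exact: mulmx1_invmx (refl_mx_invol RD i). Qed.

Section ClosedSubsystem.
Variable Q : 'I_m -> Prop.
Hypothesis closedQ : refl_closed root coroot Q.
Local Notation simple := (simple_in root f Q).

Definition simple_refls (w : 'M[int]_n) := exists i, simple i /\ w = s i.
Local Notation SQ := simple_refls.

Lemma refl_gens_simple_refls : refl_gens root coroot SQ.
Proof. by move=> g [i [_ ->]]; exists i. Qed.

Lemma gen_simple_refls_unitmx w : gen_by SQ w -> w \in unitmx.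
Proof. exact/gen_by_unitmx/refl_gens_invol/refl_gens_simple_refls. Qed.

Lemma gen_simple_refls_refls_in w : gen_by SQ w -> gen_by (refls_in root coroot Q) w.
Proof. by apply: gen_by_sub => g [i [[Qi _] ->]]; apply: gen_by_gen; exists i. Qed.

Lemma gen_simple_refls_stable w j k : gen_by SQ w -> sends_root w j k -> Q j -> Q k.
Proof.
by move=> /gen_simple_refls_refls_in Gw wjk; case: (gen_refls_in_stable RD closedQ Gw wjk).
Qed.

(* Induction on the height: a non-simple positive root [b] is moved down by
   a simple reflection [s_a] with [<b, a^v> > 0], and [s_b = s_a s_(s_a b) s_a]. *)
Lemma refl_mx_gen_simple b : Q b -> gen_by SQ (s b) /\ cox_refl SQ (s b).
Proof.
move=> Qb; wlog pb : b Qb / pos b.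
  move=> IH; case: (boolP (0 < height b)) => [|npb]; first exact: IH.
  rewrite -(refl_mx_neg RD); apply: IH; first exact: refl_closed_neg.
  by apply/(positive_neg RD GF)/negP.
rewrite /positive in pb; move: {2}`|height b|%N (leqnn `|height b|%N) => N.
elim: N b Qb pb => [|N IH] b Qb pb hb; first by lia.
case: (classic (simple b)) => sb.
  have Sb : SQ (s b) by exists b.
  by split; [apply: (gen_by_gen Sb) | apply: (cox_refl_gen Sb)].
have [a sa pa] := positive_pairing_simple RD Qb pb sb.
have ba : b != a by apply: contra_notN sb => /eqP ->.
have pb' := refl_simple_positive RD GF closedQ sa Qb pb ba.
have Qb' : Q (refl_root a b) by apply: closedQ => //; case: sa.
have hb' : (`|height (refl_root a b)| <= N)%N.
  have := pb'; rewrite /positive root_refl_root // pairingBl pairingZl.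
  have [_ [ha _]] := sa; rewrite /positive in ha.
  have : 0 < pairing (root b) (coroot a) * height a by rewrite mulr_gt0.
  lia.
have [Gb' [u [g [Gu [Sg eu]]]]] := IH _ Qb' pb' hb'.
have eb : s b = s a *m s (refl_root a b) *m s a.
  rewrite (sends_root_conj (sends_root_refl RD a (refl_root a b))) refl_rootK //.
  by rewrite -mulmxA refl_mx_invol // mulmx1.
have Sa : gen_by SQ (s a) by apply: gen_by_gen; exists a.
split; first by rewrite eb; do 2!apply: gen_byM => //.
exists (s a *m u), g; split; first exact: gen_byM.
split=> //; rewrite eb eu invmxM ?refl_mx_unit ?gen_simple_refls_unitmx //.
by rewrite invmx_refl_mx !mulmxA.
Qed.

Lemma cox_refl_simple_refls t : cox_refl SQ t -> exists b, [/\ Q b, pos b & t = s b].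
Proof.
move=> [u [g [Gu [[i [[Qi _] ->]] ->]]]].
have [k uik] := sends_root_ex RD refl_gens_simple_refls Gu i.
have Qk := gen_simple_refls_stable Gu uik Qi.
rewrite (sends_root_conjK (gen_simple_refls_unitmx Gu) uik).
case: (boolP (0 < height k)) => pk; first by exists k.
exists (neg_root k); rewrite (refl_mx_neg RD); split=> //; first exact: refl_closed_neg.
by apply/(positive_neg RD GF)/negP.
Qed.

(* If [t = s_a t'] and [t'] still sends [b] to a positive root, that root is
   [a], because [s_a] permutes the other positive roots; then [t s_b = t']. *)
Lemma exchange_word t b k : is_word SQ t -> Q b -> pos b ->
  sends_root (word_prod t) b k -> ~ pos k ->
  exists2 t', is_word SQ t' & (size t' < size t)%N /\ word_prod t' = word_prod t *m s b.
Proof.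
elim: t k => [|g t IH] k /= wt Qb pb tbk npk.
  by rewrite (sends_root_uniq RD (unitmx1 _ _) tbk (sends_root1 _ _ _)) in npk.
move: tbk; move/is_word_cons: wt => [[a [sa ->]] wt] tbk.
have Gt : gen_by SQ (word_prod t) by exists t.
have [k0 tbk0] := sends_root_ex RD refl_gens_simple_refls Gt b.
have Gat : gen_by SQ (s a *m word_prod t) by apply: gen_byM => //; apply: gen_by_gen; exists a.
have ek := sends_root_uniq RD (gen_simple_refls_unitmx Gat) tbk
  (sends_rootM tbk0 (sends_root_refl RD a k0)).
case: (boolP (0 < height k0)) => pk0; last first.
  have [t' wt' [lt et']] := IH k0 wt Qb pb tbk0 (negP pk0).
  exists (s a :: t'); first by apply/is_word_cons; split=> //; exists a.
  by rewrite /= ltnS et' mulmxA.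
have Qk0 := gen_simple_refls_stable Gt tbk0 Qb.
have k0a : k0 = a.
  apply: NNPP => /eqP k0a; apply: npk; rewrite ek.
  exact: (refl_simple_positive RD GF closedQ sa Qk0 pk0 k0a).
exists t => //; split=> //.
by rewrite -mulmxA (sends_root_conj tbk0) k0a mulmxA refl_mx_invol // mul1mx.
Qed.

Lemma len_lt_mul_refl_neg y b k : gen_by SQ y -> Q b -> pos b ->
  sends_root y b k -> ~ pos k -> len_lt SQ (y *m s b) y.
Proof.
move=> Gy Qb pb ybk npk; have [t rt] := reduced_word_ex Gy.
have [wt [et _]] := rt; rewrite -et in ybk.
have [t' wt' [lt et']] := exchange_word wt Qb pb ybk npk.
have [r rr] := reduced_word_ex (ex_intro (fun t => _) t' (conj wt' et')).
rewrite et in rr; exists r, t; split=> //; split=> //.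
by have [_ [_ /(_ t' wt')]] := rr; rewrite et' et => /(_ erefl) le; lia.
Qed.

Lemma len_lt_mul_reflP y b k : gen_by SQ y -> Q b -> pos b -> sends_root y b k ->
  len_lt SQ y (y *m s b) <-> pos k.
Proof.
move=> Gy Qb pb ybk; split=> [lt|pk].
  by apply: NNPP => npk; apply: len_lt_asym lt (len_lt_mul_refl_neg Gy Qb pb ybk npk).
have Gyb : gen_by SQ (y *m s b) by apply: gen_byM => //; case: (refl_mx_gen_simple Qb).
have := len_lt_mul_refl_neg Gyb Qb pb; rewrite -mulmxA refl_mx_invol // mulmx1; apply.
  exact: sends_rootM (sends_root_refl RD b b) (sends_root_neg RD ybk).
by move/(positive_neg RD GF).
Qed.

End ClosedSubsystem.
End Exchange.

Section ConjugateCoxeter.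
Variables (n : nat) (S1 S2 : 'M[int]_n -> Prop) (g : 'M[int]_n).
Hypothesis ug : g \in unitmx.
Hypothesis invS1 : involutions S1.
Local Notation conj M := (invmx g *m M *m g).
Local Notation conjV M := (g *m M *m invmx g).
Hypothesis conjS : forall M, S1 M <-> S2 (conj M).

Lemma conjM A B : conj (A *m B) = conj A *m conj B.
Proof. by rewrite !mulmxA (mulmxK ug). Qed.

Lemma conj1 : conj 1%:M = 1%:M.
Proof. by rewrite mulmx1 mulVmx. Qed.

Lemma conjVK M : conj (conjV M) = M.
Proof. by rewrite !mulmxA mulVmx // mul1mx (mulmxKV ug). Qed.

Lemma conjK M : conjV (conj M) = M.
Proof. by rewrite !mulmxA mulmxV // mul1mx (mulmxK ug). Qed.

Lemma word_prod_conj t : word_prod (map (fun M => conj M) t) = conj (word_prod t).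
Proof. by elim: t => [|x t IH] /=; rewrite ?conj1 // IH conjM. Qed.

Lemma word_prod_conjV t : word_prod (map (fun M => conjV M) t) = conjV (word_prod t).
Proof.
elim: t => [|x t IH] /=; first by rewrite mulmx1 mulmxV.
by rewrite IH !mulmxA (mulmxKV ug).
Qed.

Lemma reduced_word_conj t w :
  reduced_word S1 t w -> reduced_word S2 (map (fun M => conj M) t) (conj w).
Proof.
move=> [wt [et min_t]]; split; first by apply: is_word_map wt => M /conjS.
split=> [|t' wt' et']; first by rewrite word_prod_conj et.
rewrite size_map -(size_map (fun M => conjV M) t'); apply: min_t.
  by apply: is_word_map wt' => M; rewrite conjS conjVK.
by rewrite word_prod_conjV et' conjK.
Qed.

Lemma len_lt_conj u v : len_lt S1 u v -> len_lt S2 (conj u) (conj v).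
Proof.
move=> [tu [tv [ru [rv lt]]]]; exists (map (fun M => conj M) tu), (map (fun M => conj M) tv).
by rewrite !size_map; split; [|split]; rewrite ?size_map //; apply: reduced_word_conj.
Qed.

Lemma cox_refl_conj t : cox_refl S1 t -> cox_refl S2 (conj t).
Proof.
move=> [u [r [[tu [wtu <-]] [S1r ->]]]].
exists (conj (word_prod tu)), (conj r); split.
  exists (map (fun M => conj M) tu); rewrite word_prod_conj; split=> //.
  by apply: is_word_map wtu => M /conjS.
split; first exact/conjS.
have uu : word_prod tu \in unitmx by apply: (gen_by_unitmx invS1); exists tu.
have <- : conj (invmx (word_prod tu)) = invmx (conj (word_prod tu)).
  by apply/esym/mulmx1_invmx; rewrite -conjM mulmxV // conj1.
by rewrite !conjM.
Qed.

Lemma bruhat_conj x' x : bruhat S1 x' x -> bruhat S2 (conj x') (conj x).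
Proof.
elim=> [y z [t [rt [-> lt]]]| y | y z w _ IH1 _ IH2].
- apply: rt_step; exists (conj t); split; first exact: cox_refl_conj.
  by rewrite conjM; split=> //; rewrite -conjM; apply: len_lt_conj.
- exact: rt_refl.
- exact: rt_trans IH1 IH2.
Qed.

End ConjugateCoxeter.

Section PositiveElements.
Variables (n m : nat) (root : 'I_m -> 'rV[int]_n) (coroot : 'I_m -> 'cV[int]_n)
  (f : 'cV[int]_n).
Hypothesis RD : root_datum root coroot.
Hypothesis GF : generic root f.
Local Notation s := (refl_mx root coroot).
Local Notation pos := (positive root f).
Local Notation neg_root := (neg_root root coroot).
Local Notation sends_root := (sends_root root coroot).
Local Notation inW := (inW root coroot).
Local Notation simple_refls := (simple_refls root coroot f).
Local Notation Wsimple := (simple_refls (fun _ => True)).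
Implicit Types (Q : 'I_m -> Prop) (u w x y : 'M[int]_n).

Lemma refl_gens_all_refl : refl_gens root coroot (all_refl root coroot).
Proof. by move=> g [i ->]; exists i. Qed.

Lemma inW_unitmx w : inW w -> w \in unitmx.
Proof. exact/gen_by_unitmx/(refl_gens_invol RD)/refl_gens_all_refl. Qed.

Lemma inW_sends_root w : inW w -> forall j, exists k, sends_root w j k.
Proof. exact: (sends_root_ex RD refl_gens_all_refl). Qed.

Lemma inW_sends_root_onto w : inW w -> forall k, exists j, sends_root w j k.
Proof. by move=> Ww; apply: (sends_root_onto RD refl_gens_all_refl Ww). Qed.

Lemma gen_refls_in_inW Q w : gen_by (refls_in root coroot Q) w -> inW w.
Proof. by apply: gen_by_sub => g [i [_ ->]]; apply: gen_by_gen; exists i. Qed.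

Lemma refl_closedT : refl_closed root coroot (fun _ => True).
Proof. by []. Qed.

Lemma inW_gen_simple w : inW w -> gen_by Wsimple w.
Proof.
by apply: gen_by_sub => g [i ->]; case: (refl_mx_gen_simple RD GF refl_closedT (b := i) I).
Qed.

Lemma cox_refl_refl_mx b : cox_refl Wsimple (s b).
Proof. by case: (refl_mx_gen_simple RD GF refl_closedT (b := b) I). Qed.

Definition keeps_positive Q u := forall b k, Q b -> pos b -> sends_root u b k -> pos k.

Definition transports u Q1 Q2 := forall j k, sends_root u j k -> Q1 j <-> Q2 k.

Section ClosedSubsystem.
Variable Q : 'I_m -> Prop.
Hypothesis closedQ : refl_closed root coroot Q.
Local Notation SQ := (simple_refls Q).

(* [u] sends the root [y b], positive by the exchange condition in [W_Q],
   to a positive root, so the exchange condition in [W] applies to [u y]. *)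
Lemma bruhat_step_lmul u y b : keeps_positive Q u -> inW u -> gen_by SQ y ->
  Q b -> pos b -> len_lt SQ y (y *m s b) ->
  bruhat_step Wsimple (u *m y) (u *m (y *m s b)).
Proof.
move=> Pu Wu Gy Qb pb lt.
have [k ybk] := sends_root_ex RD (@refl_gens_simple_refls _ _ root coroot f Q) Gy b.
have pk := (len_lt_mul_reflP RD GF closedQ Gy Qb pb ybk).1 lt.
have Qk := gen_simple_refls_stable RD closedQ Gy ybk Qb.
have [k' ukk'] := inW_sends_root Wu k.
have Guy : gen_by Wsimple (u *m y).
  apply: gen_byM; apply: inW_gen_simple => //.
  exact/gen_refls_in_inW/gen_simple_refls_refls_in/Gy.
exists (s b); split; first exact: cox_refl_refl_mx.
rewrite mulmxA; split=> //; apply/(len_lt_mul_reflP RD GF refl_closedT) => //.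
  exact: sends_rootM ybk ukk'.
exact: Pu ukk'.
Qed.

Lemma bruhat_lmul u x' x : keeps_positive Q u -> inW u -> bruhat SQ x' x ->
  bruhat Wsimple (u *m x') (u *m x).
Proof.
move=> Pu Wu; elim=> [y z [t [rt [-> lt]]]| y | y z w _ IH1 _ IH2].
- have [b [Qb pb et]] := cox_refl_simple_refls RD GF closedQ rt; subst t.
  have Gy : gen_by SQ y by case: lt => [ty [_ [/reduced_word_gen Gy _]]].
  by apply: rt_step; apply: bruhat_step_lmul.
- exact: rt_refl.
- exact: rt_trans IH1 IH2.
Qed.

Lemma min_in_keeps_positive (B : 'M[int]_n -> Prop) u wm :
  B u -> keeps_positive Q u -> inW u ->
  (forall v, B v -> exists2 y, gen_by (refls_in root coroot Q) y & v = u *m y) ->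
  min_in root coroot f B wm -> wm = u.
Proof.
move=> Bu Pu Wu coset [Bw min_wm]; have [y Gy ewm] := coset _ Bw; subst wm.
symmetry; apply: min_wm Bu _; rewrite -{1}[u]mulmx1; apply: bruhat_lmul => //.
apply: bruhat1_gen; apply: gen_by_sub Gy => g [i [Qi ->]].
by case: (refl_mx_gen_simple RD GF closedQ Qi).
Qed.

End ClosedSubsystem.

Lemma gen_refls_in_conjV Q1 Q2 u z : inW u -> transports u Q1 Q2 ->
  gen_by (refls_in root coroot Q2) z -> gen_by (refls_in root coroot Q1) (invmx u *m z *m u).
Proof.
move=> Wu tr [t [+ <-]]; have uu := inW_unitmx Wu.
elim: t => [|g t IH] /= wt; first by rewrite mulmx1 mulVmx //; apply: gen_by1.
move/is_word_cons: wt => [[k [Qk ->]] wt].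
have [j ujk] := inW_sends_root_onto Wu k.
rewrite (_ : invmx u *m (s k *m word_prod t) *m u =
  (invmx u *m s k *m u) *m (invmx u *m word_prod t *m u)); last by rewrite !mulmxA (mulmxK uu).
rewrite (sends_root_conjV uu ujk); apply: gen_byM; last exact: IH.
by apply: gen_by_gen; exists j; split=> //; apply/(tr _ _ ujk).
Qed.

Lemma gen_refls_in_conj Q1 Q2 u x : inW u -> transports u Q1 Q2 ->
  gen_by (refls_in root coroot Q1) x -> gen_by (refls_in root coroot Q2) (u *m x *m invmx u).
Proof.
move=> Wu tr Gx; have uu := inW_unitmx Wu.
rewrite -{1}[u]invmxK; apply: gen_refls_in_conjV Gx.
  exact: gen_by_inv (refl_gens_invol RD refl_gens_all_refl) Wu.
move=> k j ikj; apply: iff_sym (tr _ _ _); rewrite -[u]invmxK.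
by apply: sends_root_inv ikj; rewrite unitmx_inv.
Qed.

Section KeepsPositive.
Variables (Q1 Q2 : 'I_m -> Prop) (u : 'M[int]_n).
Hypotheses (closedQ1 : refl_closed root coroot Q1) (Wu : inW u).
Hypotheses (tr : transports u Q1 Q2) (Pu : keeps_positive Q1 u).

Lemma keeps_positive_preimage j k : sends_root u j k -> Q2 k -> pos k -> pos j.
Proof.
move=> ujk Qk pk; apply: NNPP => npj.
have Qj := (tr ujk).2 Qk; have := Pu (refl_closed_neg closedQ1 Qj).
by move/(_ _ ((positive_neg RD GF _).2 npj) (sends_root_neg RD ujk))/(positive_neg RD GF).
Qed.

Lemma keeps_positiveM v : inW v -> keeps_positive Q2 v -> keeps_positive Q1 (v *m u).
Proof.
move=> Wv Pv b k Qb pb vubk.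
have [k0 ubk0] := inW_sends_root Wu b; have [k1 vk0k1] := inW_sends_root Wv k0.
rewrite (sends_root_uniq RD (inW_unitmx (gen_byM Wv Wu)) vubk (sends_rootM ubk0 vk0k1)).
by apply: Pv vk0k1; [apply/(tr ubk0) | apply: Pu ubk0].
Qed.

Lemma keeps_positive_simple j k : sends_root u j k ->
  simple_in root f Q1 j <-> simple_in root f Q2 k.
Proof.
move=> ujk; have uu := inW_unitmx Wu; split.
  move=> [Qj [pj indec_j]]; split; first exact/(tr ujk).
  split=> [|[a' [b' [Qa' [pa' [Qb' [pb' e]]]]]]]; first exact: Pu ujk.
  have [a ua] := inW_sends_root_onto Wu a'; have [b ub] := inW_sends_root_onto Wu b'.
  apply: indec_j; exists a, b.
  split; [exact/(tr ua) | split; [exact: keeps_positive_preimage ua Qa' pa' |]].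
  split; [exact/(tr ub) | split; [exact: keeps_positive_preimage ub Qb' pb' |]].
  by case: ujk => [<- _]; case: ua => [<- _]; case: ub => [<- _]; rewrite e mulmxDl.
move=> [Qk [pk indec_k]]; split; first exact/(tr ujk).
split=> [|[a [b [Qa [pa [Qb [pb e]]]]]]]; first exact: keeps_positive_preimage ujk Qk pk.
have [a' ua] := inW_sends_root Wu a; have [b' ub] := inW_sends_root Wu b.
apply: indec_k; exists a', b'.
split; [exact/(tr ua) | split; [exact: Pu Qa pa ua |]].
split; [exact/(tr ub) | split; [exact: Pu Qb pb ub |]].
apply: (can_inj (mulmxK uu)); rewrite mulmxDl.
by case: ujk => [-> _]; case: ua => [-> _]; case: ub => [-> _].
Qed.

Lemma simple_refls_conjV M :
  simple_refls Q2 M <-> simple_refls Q1 (invmx u *m M *m u).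
Proof.
have uu := inW_unitmx Wu; split=> [[k [sk ->]] | [j [sj e]]].
  have [j ujk] := inW_sends_root_onto Wu k.
  by exists j; rewrite (sends_root_conjV uu ujk); split=> //; apply/(keeps_positive_simple ujk).
have [k ujk] := inW_sends_root Wu j; exists k; split; first exact/(keeps_positive_simple ujk).
by rewrite -(sends_root_conjK uu ujk) -e !mulmxA mulmxV // mul1mx mulmxK.
Qed.

End KeepsPositive.
End PositiveElements.

Section Blocks.
Variables (n m : nat) (root : 'I_m -> 'rV[int]_n) (coroot : 'I_m -> 'cV[int]_n)
  (f : 'cV[int]_n) (A : zmodType).
Hypothesis RD : root_datum root coroot.
Hypothesis GF : generic root f.
Local Notation s := (refl_mx root coroot).
Local Notation inW := (inW root coroot).
Local Notation PhiL L := (inPhiL coroot L).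
Local Notation block L := (block root coroot L).
Local Notation transports := (transports root coroot).
Local Notation keeps_positive := (keeps_positive root coroot f).
Local Notation refls_in := (refls_in root coroot).
Implicit Types (L : {additive 'cV[int]_n -> A}) (a b g w x : 'M[int]_n).

Lemma refl_closed_PhiL L : refl_closed root coroot (PhiL L).
Proof.
move=> i j Li Lj; rewrite /inPhiL coroot_refl_root // raddfB.
have -> : pairing (root i) (coroot j) *: coroot i = coroot i *~ pairing (root i) (coroot j).
  by rewrite -scaler_int intz.
by rewrite raddfMz Li Lj mul0rz subr0.
Qed.

Lemma maps_transports (L L' : 'cV[int]_n -> A) b :
  maps root coroot b L L' -> transports b (PhiL L) (PhiL L').
Proof. by move=> [Wb bL] j k [_ ck]; rewrite /inPhiL -bL /act -ck mulKmx ?(inW_unitmx RD). Qed.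

Lemma block_inW (L : 'cV[int]_n -> A) b w : inW b -> block L b w -> inW w.
Proof. by move=> Wb [x [Gx ->]]; apply: gen_byM Wb (gen_refls_in_inW (Q := PhiL L) Gx). Qed.

Lemma block_transports L L' b w :
  maps root coroot b L L' -> block L b w -> transports w (PhiL L) (PhiL L').
Proof.
move=> bLL' Bw j k wjk; have [Wb _] := bLL'; have [x [Gx ew]] := Bw.
have [k0 xjk0] := sends_root_ex RD (@refl_gens_refls_in _ _ root coroot (PhiL L)) Gx j.
have [k1 bk0k1] := inW_sends_root RD Wb k0.
have -> : k = k1.
  apply: (sends_root_uniq RD (inW_unitmx RD (block_inW Wb Bw)) wjk).
  by rewrite ew; apply: sends_rootM xjk0 bk0k1.
exact: (iff_trans (gen_refls_in_stable RD (refl_closed_PhiL (L := L)) Gx xjk0)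
  (maps_transports bLL' bk0k1)).
Qed.

Lemma block_coset (L : 'cV[int]_n -> A) b w w' : inW b -> block L b w -> block L b w' ->
  gen_by (refls_in (PhiL L)) (invmx w *m w').
Proof.
move=> Wb [x [Gx ->]] [x' [Gx' ->]].
have ux : x \in unitmx by apply/(inW_unitmx RD)/(gen_refls_in_inW Gx).
rewrite invmxM ?ux ?(inW_unitmx RD) // -mulmxA (mulmxA (invmx b)) mulVmx ?(inW_unitmx RD) // mul1mx.
exact/gen_byM/Gx'/(gen_by_inv (refl_gens_invol RD (@refl_gens_refls_in _ _ root coroot _)) Gx).
Qed.

(* Otherwise [wm s_c] lies in the block and below [wm] in the Bruhat order. *)
Lemma min_block_keeps_positive (L : 'cV[int]_n -> A) b wm : inW b ->
  min_in root coroot f (block L b) wm -> keeps_positive (PhiL L) wm.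
Proof.
move=> Wb [Bw min_wm] c k Lc pc wck; apply: NNPP => npk.
have Wwm := block_inW Wb Bw.
have Bv : block L b (wm *m s c).
  have [x [Gx ->]] := Bw; exists (x *m s c); rewrite mulmxA; split=> //.
  by apply: gen_byM Gx (gen_by_gen _); exists c.
have lt := len_lt_mul_refl_neg RD GF (refl_closedT root coroot)
  (inW_gen_simple RD GF Wwm) I pc wck npk.
have /(can_inj (mulKmx (inW_unitmx RD Wwm))) : wm *m s c = wm *m 1%:M.
  rewrite mulmx1; apply: min_wm Bv (rt_step _ _ _ _ _); exists (s c).
  by rewrite -mulmxA refl_mx_invol // mulmx1; split=> //; apply: cox_refl_refl_mx.
move/(congr1 (mulmx^~ (coroot c))); rewrite mul1mx (refl_mul_coroot RD).
move/(congr1 (pairing (root c))); rewrite -/(neg_root root coroot c) (coroot_neg RD).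
by rewrite pairingNr (pairing_root_coroot RD).
Qed.

Lemma block_prod_coset L1 L2 a g v1 v2 w1 w2 :
  maps root coroot a L1 L2 -> inW g -> block L2 g v1 -> block L2 g v2 ->
  block L1 a w1 -> block L1 a w2 ->
  gen_by (refls_in (PhiL L1)) (invmx (v1 *m w1) *m (v2 *m w2)).
Proof.
move=> aL1L2 Wg Bv1 Bv2 Bw1 Bw2; have [Wa _] := aL1L2.
have uw1 := inW_unitmx RD (block_inW Wa Bw1).
rewrite invmxM ?(inW_unitmx RD (block_inW Wg Bv1)) //.
rewrite (_ : invmx w1 *m invmx v1 *m (v2 *m w2) =
   (invmx w1 *m (invmx v1 *m v2) *m w1) *m (invmx w1 *m w2)); last first.
  by rewrite !mulmxA (mulmxK uw1).
apply: gen_byM; last exact: block_coset Bw1 Bw2.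
apply: (gen_refls_in_conjV RD (block_inW Wa Bw1) (block_transports aL1L2 Bw1)).
exact: block_coset Bv1 Bv2.
Qed.

Lemma min_block_prod L1 L2 L3 a g wa wg wm :
  maps root coroot a L1 L2 -> maps root coroot g L2 L3 ->
  min_in root coroot f (block L1 a) wa -> min_in root coroot f (block L2 g) wg ->
  min_in root coroot f (block_prod (block L2 g) (block L1 a)) wm -> wm = wg *m wa.
Proof.
move=> aL1L2 [Wg _] Ma Mg Mm; have [Wa _] := aL1L2.
have [Bwa _] := Ma; have [Bwg _] := Mg.
have Wwa := block_inW Wa Bwa; have Wwg := block_inW Wg Bwg.
apply: (min_in_keeps_positive RD GF (refl_closed_PhiL (L := L1)) _ _ _ _ Mm).
- by exists wg, wa.
- apply: (keeps_positiveM RD Wwa (block_transports aL1L2 Bwa) _ Wwg).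
    exact: min_block_keeps_positive Wa Ma.
  exact: min_block_keeps_positive Wg Mg.
- exact: gen_byM.
move=> v [v1 [v2 [Bv1 [Bv2 ->]]]]; exists (invmx (wg *m wa) *m (v1 *m v2)).
  exact: block_prod_coset aL1L2 Wg Bwg Bv1 Bwa Bv2.
by rewrite mulKVmx // (inW_unitmx RD) //; apply: gen_byM.
Qed.

End Blocks.

Section BlockIsomorphisms.
Variables (n m : nat) (root : 'I_m -> 'rV[int]_n) (coroot : 'I_m -> 'cV[int]_n)
  (f : 'cV[int]_n) (A : zmodType).
Hypothesis RD : root_datum root coroot.
Hypothesis GF : generic root f.
Local Notation inW := (inW root coroot).
Local Notation PhiL L := (inPhiL coroot L).
Local Notation block L := (block root coroot L).
Local Notation le_block := (le_block root coroot f).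
Local Notation min_in := (min_in root coroot f).
Local Notation simple_refls := (simple_refls root coroot f).
Implicit Types (L : {additive 'cV[int]_n -> A}) (b c d u w x : 'M[int]_n).

Lemma le_block_lmul (L : 'cV[int]_n -> A) u wm w' w : u \in unitmx ->
  le_block L wm w' w <-> le_block L (u *m wm) (u *m w') (u *m w).
Proof.
move=> uu; split=> [[x [x' [Gx [Gx' [-> [-> br]]]]]] | [x [x' [Gx [Gx' [e [e' br]]]]]]].
  by exists x, x'; rewrite !mulmxA.
rewrite -!mulmxA in e e'; exists x, x'; do !split=> //.
  exact: (can_inj (mulKmx uu)).
exact: (can_inj (mulKmx uu)).
Qed.

Lemma le_block_rmul L L'' u wm w' w : inW u -> transports root coroot u (PhiL L'') (PhiL L) ->
  keeps_positive root coroot f (PhiL L'') u ->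
  le_block L wm w' w <-> le_block L'' (wm *m u) (w' *m u) (w *m u).
Proof.
move=> Wu tr Pu; have uu := inW_unitmx RD Wu.
have conjS := simple_refls_conjV RD GF (refl_closed_PhiL RD (L := L'')) Wu tr Pu.
have invS Q : involutions (simple_refls Q) by apply/(refl_gens_invol RD)/refl_gens_simple_refls.
split=> [[x [x' [Gx [Gx' [-> [-> br]]]]]] | [y [y' [Gy [Gy' [e [e' br]]]]]]].
  exists (invmx u *m x *m u), (invmx u *m x' *m u).
  split; first exact: (gen_refls_in_conjV RD Wu tr).
  split; first exact: (gen_refls_in_conjV RD Wu tr).
  split; first by rewrite !mulmxA (mulmxK uu).
  split; first by rewrite !mulmxA (mulmxK uu).
  exact: (bruhat_conj uu (invS _) conjS br).
exists (u *m y *m invmx u), (u *m y' *m invmx u).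
split; first exact: (gen_refls_in_conj RD Wu tr).
split; first exact: (gen_refls_in_conj RD Wu tr).
split; first by apply: (can_inj (mulmxK uu)); rewrite e !mulmxA (mulmxKV uu).
split; first by apply: (can_inj (mulmxK uu)); rewrite e' !mulmxA (mulmxKV uu).
have conjS' M : simple_refls (PhiL L'') M <->
    simple_refls (PhiL L) (invmx (invmx u) *m M *m invmx u).
  by rewrite invmxK conjS !mulmxA mulVmx // mul1mx (mulmxKV uu).
have uu' : invmx u \in unitmx by rewrite unitmx_inv.
by have := bruhat_conj uu' (invS _) conjS' br; rewrite invmxK.
Qed.

Lemma block_prod_lmul L L' b c wc : maps root coroot b L L' -> inW c -> block L' c wc ->
  forall v, block_prod (block L' c) (block L b) v -> exists2 w, block L b w & v = wc *m w.
Proof.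
move=> bL Wc Bwc v [w1 [w2 [Bw1 [[x2 [Gx2 ->]] ->]]]]; have [Wb _] := bL.
have ub := inW_unitmx RD Wb; have uwc := inW_unitmx RD (block_inW Wc Bwc).
exists (invmx wc *m (w1 *m (b *m x2))); last by rewrite mulKVmx.
exists (invmx b *m (invmx wc *m w1) *m b *m x2); split; last first.
  by rewrite !mulmxA (mulmxV ub) mul1mx.
apply: (gen_byM _ Gx2); apply: (gen_refls_in_conjV RD Wb (maps_transports RD bL)).
exact: block_coset Wc Bwc Bw1.
Qed.

Lemma block_prod_rmul L L'' b d wd : maps root coroot d L'' L -> inW b -> block L'' d wd ->
  forall v, block_prod (block L b) (block L'' d) v -> exists2 w, block L b w & v = w *m wd.
Proof.
move=> dL Wb Bwd v [_ [w2 [[x1 [Gx1 ->]] [Bw2 ->]]]]; have [Wd _] := dL.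
have Wwd := block_inW Wd Bwd; have uwd := inW_unitmx RD Wwd.
exists (b *m x1 *m w2 *m invmx wd); last by rewrite mulmxKV // mulmxA.
exists (x1 *m (wd *m (invmx wd *m w2) *m invmx wd)); split; last first.
  by rewrite !mulmxA (mulmxK uwd).
apply: (gen_byM Gx1); apply: (gen_refls_in_conj RD Wwd (block_transports RD dL Bwd)).
exact: block_coset Wd Bwd Bw2.
Qed.

Lemma block_lmul_iso L L' L'' b c wb wc wcb :
  maps root coroot b L L' -> maps root coroot c L' L'' ->
  min_in (block L b) wb -> min_in (block L' c) wc ->
  min_in (block_prod (block L' c) (block L b)) wcb ->
  poset_iso (block L b) (block_prod (block L' c) (block L b))
    (le_block L wb) (le_block L wcb) (lmul wc).
Proof.
move=> bL cL Mb Mc Mcb; have [Wc _] := cL; have [Bwc _] := Mc.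
have uwc := inW_unitmx RD (block_inW Wc Bwc).
rewrite (min_block_prod RD GF bL cL Mb Mc Mcb).
split; [by move=> w Bw; exists wc, w | split].
  by move=> v /(block_prod_lmul bL Wc Bwc) [w Bw ->]; exists w.
split=> [w w' _ _|w w' _ _]; first exact: (can_inj (mulKmx uwc)).
exact: le_block_lmul.
Qed.

Lemma block_rmul_iso L L' L'' b d wb wd wbd :
  maps root coroot b L L' -> maps root coroot d L'' L ->
  min_in (block L b) wb -> min_in (block L'' d) wd ->
  min_in (block_prod (block L b) (block L'' d)) wbd ->
  poset_iso (block L b) (block_prod (block L b) (block L'' d))
    (le_block L wb) (le_block L'' wbd) (rmul wd).
Proof.
move=> bL dL Mb Md Mbd; have [Wb _] := bL; have [Wd _] := dL; have [Bwd _] := Md.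
have Wwd := block_inW Wd Bwd.
rewrite (min_block_prod RD GF dL bL Md Mb Mbd).
split; [by move=> w Bw; exists w, wd | split].
  by move=> v /(block_prod_rmul dL Wb Bwd) [w Bw ->]; exists w.
split=> [w w' _ _|w w' _ _]; first exact: (can_inj (mulmxK (inW_unitmx RD Wwd))).
rewrite /rmul; apply: le_block_rmul => //; first exact: (block_transports RD dL Bwd).
exact: (min_block_keeps_positive RD GF Wd Md).
Qed.

Lemma le_block_bruhat L b wb w' w : inW b -> min_in (block L b) wb ->
  le_block L wb w' w -> bruhat (simple_refl root coroot f) w' w.
Proof.
move=> Wb Mb [x [x' [_ [_ [-> [-> br]]]]]].
exact: (bruhat_lmul RD GF (refl_closed_PhiL RD (L := L)) (min_block_keeps_positive RD GF Wb Mb)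
  (block_inW Wb Mb.1) br).
Qed.

End BlockIsomorphisms.

Theorem lemma4p8 (n m : nat) (root : 'I_m -> 'rV[int]_n)
  (coroot : 'I_m -> 'cV[int]_n) (f : 'cV[int]_n) (A : zmodType)
  (L L' : {additive 'cV[int]_n -> A}) (b : 'M[int]_n) :
  root_datum root coroot -> generic root f ->
  maps root coroot b L L' ->
  (* (1) *)
  (forall (L'' : {additive 'cV[int]_n -> A}) (c : 'M[int]_n),
     maps root coroot c L' L'' ->
     forall wb wc wcb,
       min_in root coroot f (block root coroot L b) wb ->
       min_in root coroot f (block root coroot L' c) wc ->
       min_in root coroot f (block_prod (block root coroot L' c) (block root coroot L b)) wcb ->
       poset_iso (block root coroot L b)
         (block_prod (block root coroot L' c) (block root coroot L b))
         (le_block root coroot f L wb) (le_block root coroot f L wcb)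
         (lmul wc)) /\
  (* (2) *)
  (forall (L'' : {additive 'cV[int]_n -> A}) (d : 'M[int]_n),
     maps root coroot d L'' L ->
     forall wb wd wbd,
       min_in root coroot f (block root coroot L b) wb ->
       min_in root coroot f (block root coroot L'' d) wd ->
       min_in root coroot f (block_prod (block root coroot L b) (block root coroot L'' d)) wbd ->
       poset_iso (block root coroot L b)
         (block_prod (block root coroot L b) (block root coroot L'' d))
         (le_block root coroot f L wb) (le_block root coroot f L'' wbd)
         (rmul wd)) /\
  (* (3) *)
  (forall wb, min_in root coroot f (block root coroot L b) wb ->
     forall w w', block root coroot L b w -> block root coroot L b w' ->
       le_block root coroot f L wb w' w ->
       bruhat (simple_refl root coroot f) w' w).
Proof.
move=> RD GF bL; have [Wb _] := bL.
split; [|split].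
- move=> L'' c cL wb wc wcb; exact: (block_lmul_iso RD GF bL cL).
- move=> L'' d dL wb wd wbd; exact: (block_rmul_iso RD GF bL dL).
- move=> wb Mb w w' _ _; exact: (le_block_bruhat RD GF Wb Mb).
Qed.
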